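(* Let $A(x)=\sin^2(2\pi x)$, $\hat m(A)=\frac{A(1/3)+A(2/3)}{2}$, $\eta(x)=\frac{x}{4}+\frac12$, $F(x)=A(\frac{x}{2})+A(\frac{x}{4}+\frac12)$, and $V_2(x)=\lim_{n\to\infty}\sum_{i=0}^{n-1}[F(\eta^i(x))-2\hat m(A)]$ for $x\in[0,1]$. For each $N$ let $$\varphi_N(x)=\sum_{i=0}^{N}\frac{2\pi}{4^i}\left(\sin(\pi\eta^i(x))\cos(\pi\eta^i(x))+\frac12\sin\left(\frac{\pi\eta^i(x)}{2}\right)\cos\left(\frac{\pi\eta^i(x)}{2}\right)\right).$$ Then $V_2'(x)=\varphi_N(x)+\xi_N(x)$ with $|\xi_N(x)|\le 3\pi\sum_{i=N}^{\infty}\frac{1}{4^i}=\frac{\pi}{4^{N-1}}$ for all $x\in[0,1]$.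
   Context: $\eta^i$ denotes the $i$-th iterate of $\eta$, with $\eta^0$ the identity. *)

From Stdlib Require Import Reals.
From Coquelicot Require Import Coquelicot.
Open Scope R_scope.

Definition A (x : R) : R := (sin (2 * PI * x)) ^ 2.
Definition mhat : R := (A (1/3) + A (2/3)) / 2.
Definition eta (x : R) : R := x / 4 + 1 / 2.
Definition eta_it (i : nat) (x : R) : R := Nat.iter i eta x.
Definition F (x : R) : R := A (x / 2) + A (x / 4 + 1 / 2).

Definition V2_partial (x : R) (n : nat) : R :=
  sum_n (fun i => F (eta_it i x) - 2 * mhat) n.
Definition V2 (x : R) : R := real (Lim_seq (V2_partial x)).

Definition phi (N : nat) (x : R) : R :=
  sum_n (fun i => 2 * PI / 4 ^ i *
     (sin (PI * eta_it i x) * cos (PI * eta_it i x)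
      + 1 / 2 * (sin (PI * eta_it i x / 2) * cos (PI * eta_it i x / 2)))) N.

From Stdlib Require Import Reals Ranalysis5 Lra.
From Coquelicot Require Import Coquelicot.
Open Scope R_scope.

(** The point 2/3 is the fixed point of the contraction [eta], so
    [eta^i x = (x - 2/3) / 4^i + 2/3], and [F (2/3) = 2 mhat]: by the mean value
    theorem the i-th term of [V2] is O(4^-i), and by the chain rule its derivative
    is [dF (eta^i x) / 4^i] with [|dF| <= 3 pi].  The derivatives are thus uniformly
    dominated by a geometric series, so [V2] can be differentiated term by term,
    [phi N] is the N-th partial sum of the derived series, and the error is its
    tail, at most [3 pi sum_(i > N) 4^-i]. *)

Lemma ex_series_Rabs_le (a b : nat -> R) :
  (forall n, Rabs (a n) <= b n) -> ex_series b -> ex_series (fun n => Rabs (a n)).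
Proof.
  intros Hab Hb.
  apply (@ex_series_le R_AbsRing R_CompleteNormedModule _ b); [|exact Hb].
  intro n. unfold norm; simpl. unfold abs; simpl. rewrite Rabs_Rabsolu. apply Hab.
Qed.

Lemma Series_Rabs_le (a b : nat -> R) :
  (forall n, Rabs (a n) <= b n) -> ex_series b -> Rabs (Series a) <= Series b.
Proof.
  intros Hab Hb. eapply Rle_trans.
  - apply Series_Rabs, (ex_series_Rabs_le a b Hab Hb).
  - apply Series_le; [|exact Hb]. intro n. split; [apply Rabs_pos | apply Hab].
Qed.

Lemma Series_minus_sum_n (a : nat -> R) (N : nat) :
  ex_series a -> Series a - sum_n a N = Series (fun k => a (k + S N)%nat).
Proof.
  intro Ha. rewrite (Series_incr_n a (S N)), sum_n_Reals; [|apply Nat.lt_0_succ|exact Ha].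
  simpl Init.Nat.pred.
  rewrite (Series_ext _ (fun k => a (k + S N)%nat)); [ring|].
  intro k. rewrite Nat.add_comm. reflexivity.
Qed.

Lemma is_series_inv_pow_shift (q : R) (m : nat) :
  1 < q -> is_series (fun i => / q ^ (i + m)) (q / (q - 1) / q ^ m).
Proof.
  intro Hq.
  assert (Hqm : q ^ m <> 0) by (apply pow_nonzero; lra).
  apply is_series_ext with (a := fun i => scal (/ q ^ m) ((/ q) ^ i)).
  { intro i. unfold scal; simpl. unfold mult; simpl.
    rewrite pow_add, Rinv_mult, pow_inv. ring. }
  replace (q / (q - 1) / q ^ m) with (scal (/ q ^ m) (/ (1 - / q))).
  - apply (@is_series_scal_l R_AbsRing R_NormedModule), is_series_geom.
    rewrite Rabs_right by (apply Rle_ge, Rlt_le, Rinv_0_lt_compat; lra).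
    rewrite <- Rinv_1. apply Rinv_1_lt_contravar; lra.
  - unfold scal; simpl. unfold mult; simpl. field. lra.
Qed.

Section TermwiseDerivative.

Variables (f df : nat -> R -> R) (M : nat -> R).
Hypothesis f_derive : forall n y, is_derive (f n) y (df n y).
Hypothesis df_continuous : forall n y, continuous (df n) y.
Hypothesis df_bound : forall n y, Rabs (df n y) <= M n.
Hypothesis M_summable : ex_series M.
Hypothesis f_summable : forall y, ex_series (fun n => f n y).

Let df_summable (y : R) : ex_series (fun n => df n y) :=
  ex_series_Rabs _ (ex_series_Rabs_le _ _ (fun n => df_bound n y) M_summable).

Let df_cv (y : R) : {l : R | Un_cv (fun N => SP df N y) l} :=
  exist _ (Series (fun n => df n y))
    (proj1 (is_series_Reals _ _) (Series_correct _ (df_summable y))).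

Lemma is_derive_Series (y : R) :
  is_derive (fun z => Series (fun n => f n z)) y (Series (fun n => df n y)).
Proof.
  assert (Hr : 0 < Rabs y + 1) by (pose proof (Rabs_pos y); lra).
  set (r := mkposreal _ Hr).
  assert (Hy : Boule 0 r y) by (unfold Boule; simpl; rewrite Rminus_0_r; lra).
  assert (cvn : CVN_r df r).
  { exists M, (Series M). split.
    - apply is_series_Reals.
      apply is_series_ext with (a := M); [|apply Series_correct, M_summable].
      intro n. rewrite Rabs_right; [reflexivity|].
      apply Rle_ge, Rle_trans with (2 := df_bound n 0), Rabs_pos.
    - intros n z _. apply df_bound. }
  apply is_derive_Reals.
  change (Series (fun n => df n y)) with (SFL df df_cv y).
  apply (derivable_pt_lim_CVU (fun n z => sum_f_R0 (fun k => f k z) n) (SP df)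
           _ _ y 0 r Hy).
  - intros z n _. apply is_derive_Reals.
    apply is_derive_ext with (f := fun z => sum_n (fun k => f k z) n).
    { intro t. apply sum_n_Reals. }
    unfold SP. rewrite <- sum_n_Reals.
    apply (@is_derive_sum_n R_AbsRing R_NormedModule f n z (fun k => df k z)). intros k _. apply f_derive.
  - intros z _. apply is_series_Reals, Series_correct, f_summable.
  - apply CVN_CVU, cvn.
  - intros z Hz. apply (SFL_continuity_pt df df_cv r cvn); [|exact Hz].
    intros n t _. apply continuity_pt_filterlim, df_continuous.
Qed.

End TermwiseDerivative.

Definition dF (y : R) : R :=
  2 * PI * (sin (PI * y) * cos (PI * y) + 1 / 2 * (sin (PI * y / 2) * cos (PI * y / 2))).

Lemma is_derive_F (y : R) : is_derive F y (dF y).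
Proof.
  unfold F, A, dF. auto_derive; [exact I|].
  replace (2 * PI * (y * / 4 + 1 / 2)) with (PI * y / 2 + PI) by field.
  rewrite neg_sin, neg_cos.
  replace (2 * PI * (y * / 2)) with (PI * y) by field.
  field.
Qed.

Lemma Rabs_sin_cos_le_1 (t : R) : Rabs (sin t * cos t) <= 1.
Proof.
  rewrite Rabs_mult, <- (Rmult_1_r 1).
  apply Rmult_le_compat; try apply Rabs_pos; apply Rabs_le;
    [apply SIN_bound | apply COS_bound].
Qed.

Lemma Rabs_dF_le (y : R) : Rabs (dF y) <= 3 * PI.
Proof.
  pose proof PI_RGT_0.
  pose proof (Rabs_sin_cos_le_1 (PI * y)).
  pose proof (Rabs_sin_cos_le_1 (PI * y / 2)).
  unfold dF. rewrite Rabs_mult, Rabs_right by lra.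
  replace (3 * PI) with (2 * PI * (3 / 2)) by field.
  apply Rmult_le_compat_l; [lra|].
  eapply Rle_trans; [apply Rabs_triang|].
  rewrite (Rabs_mult (1 / 2)), (Rabs_right (1 / 2)) by lra. lra.
Qed.

Lemma eta_itE (i : nat) (y : R) : eta_it i y = (y - 2 / 3) / 4 ^ i + 2 / 3.
Proof.
  induction i as [|i IH]; unfold eta_it in *; simpl.
  - field.
  - rewrite IH. unfold eta. field. apply pow_nonzero. lra.
Qed.

Lemma is_derive_eta_it (i : nat) (y : R) : is_derive (eta_it i) y (/ 4 ^ i).
Proof.
  apply is_derive_ext with (f := fun y => (y - 2 / 3) / 4 ^ i + 2 / 3).
  { intro t. symmetry. apply eta_itE. }
  auto_derive; [exact I|]. field. apply pow_nonzero. lra.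
Qed.

Lemma F_two_thirds : F (2 / 3) = 2 * mhat.
Proof.
  unfold F, mhat.
  replace (2 / 3 / 2) with (1 / 3) by field.
  replace (2 / 3 / 4 + 1 / 2) with (2 / 3) by field.
  field.
Qed.

Definition V2_term (i : nat) (y : R) : R := F (eta_it i y) - 2 * mhat.

Definition dV2_term (i : nat) (y : R) : R := dF (eta_it i y) / 4 ^ i.

Lemma is_derive_V2_term (i : nat) (y : R) : is_derive (V2_term i) y (dV2_term i y).
Proof.
  unfold V2_term, dV2_term.
  apply is_derive_ext with (f := fun y => F (eta_it i y) + - (2 * mhat)); [reflexivity|].
  replace (dF (eta_it i y) / 4 ^ i) with (/ 4 ^ i * dF (eta_it i y) + 0) by (unfold Rdiv; ring).
  apply (@is_derive_plus R_AbsRing R_NormedModule).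
  - apply (@is_derive_comp R_AbsRing R_NormedModule); [apply is_derive_F|apply is_derive_eta_it].
  - apply (@is_derive_const R_AbsRing R_NormedModule).
Qed.

Lemma continuous_dV2_term (i : nat) (y : R) : continuous (dV2_term i) y.
Proof.
  apply (@ex_derive_continuous R_AbsRing R_NormedModule).
  apply ex_derive_ext with (f := fun y => dF ((y - 2 / 3) / 4 ^ i + 2 / 3) / 4 ^ i).
  { intro t. unfold dV2_term. rewrite eta_itE. reflexivity. }
  unfold dF. auto_derive. exact I.
Qed.

Lemma Rabs_dV2_term_le (i : nat) (y : R) : Rabs (dV2_term i y) <= 3 * PI / 4 ^ i.
Proof.
  assert (H4 : 0 < 4 ^ i) by (apply pow_lt; lra).
  unfold dV2_term, Rdiv. rewrite Rabs_mult, (Rabs_right (/ 4 ^ i)).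
  - apply Rmult_le_compat_r; [apply Rlt_le, Rinv_0_lt_compat, H4|apply Rabs_dF_le].
  - apply Rle_ge, Rlt_le, Rinv_0_lt_compat, H4.
Qed.

Lemma Rabs_V2_term_le (i : nat) (y : R) :
  Rabs (V2_term i y) <= 3 * PI * Rabs (y - 2 / 3) / 4 ^ i.
Proof.
  assert (H4 : 0 < 4 ^ i) by (apply pow_lt; lra).
  unfold V2_term. rewrite <- F_two_thirds.
  destruct (MVT_abs F dF (2 / 3) (eta_it i y)) as [c [Hc _]].
  { intros c _. apply is_derive_Reals, is_derive_F. }
  rewrite Hc, eta_itE.
  replace ((y - 2 / 3) / 4 ^ i + 2 / 3 - 2 / 3) with ((y - 2 / 3) / 4 ^ i) by ring.
  unfold Rdiv. rewrite Rabs_mult, (Rabs_right (/ 4 ^ i)), <- Rmult_assoc.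
  - apply Rmult_le_compat_r; [apply Rlt_le, Rinv_0_lt_compat, H4|].
    apply Rmult_le_compat_r; [apply Rabs_pos|apply Rabs_dF_le].
  - apply Rle_ge, Rlt_le, Rinv_0_lt_compat, H4.
Qed.

Lemma ex_series_const_mul_inv_pow4 (c : R) : ex_series (fun i => c / 4 ^ i).
Proof.
  apply ex_series_ext with (a := fun i => scal c (/ 4 ^ (i + 0))).
  { intro i. rewrite Nat.add_0_r. reflexivity. }
  apply (@ex_series_scal_l R_AbsRing R_NormedModule).
  eexists. apply is_series_inv_pow_shift. lra.
Qed.

Lemma ex_series_V2_term (y : R) : ex_series (fun i => V2_term i y).
Proof.
  apply ex_series_Rabs, (ex_series_Rabs_le _ _ (fun i => Rabs_V2_term_le i y)).
  apply ex_series_const_mul_inv_pow4.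
Qed.

Lemma ex_series_dV2_term (y : R) : ex_series (fun i => dV2_term i y).
Proof.
  apply ex_series_Rabs, (ex_series_Rabs_le _ _ (fun i => Rabs_dV2_term_le i y)).
  apply ex_series_const_mul_inv_pow4.
Qed.

Lemma is_derive_V2 (y : R) : is_derive V2 y (Series (fun i => dV2_term i y)).
Proof.
  apply (is_derive_Series V2_term dV2_term (fun i => 3 * PI / 4 ^ i)).
  - apply is_derive_V2_term.
  - apply continuous_dV2_term.
  - apply Rabs_dV2_term_le.
  - apply ex_series_const_mul_inv_pow4.
  - apply ex_series_V2_term.
Qed.

Lemma phi_sum_dV2_term (N : nat) (x : R) : phi N x = sum_n (fun i => dV2_term i x) N.
Proof.
  unfold phi. apply sum_n_ext. intro i. unfold dV2_term, dF; simpl. field. apply pow_nonzero. lra.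
Qed.

Lemma Rabs_dV2_term_tail_le (N : nat) (x : R) (k : nat) :
  Rabs (dV2_term (k + S N) x) <= 3 * PI * / 4 ^ (k + N).
Proof.
  pose proof PI_RGT_0.
  assert (H4 : 0 < 4 ^ (k + N)) by (apply pow_lt; lra).
  eapply Rle_trans; [apply Rabs_dV2_term_le|].
  rewrite <- plus_n_Sm. simpl pow.
  apply Rmult_le_compat_l; [lra|].
  apply Rinv_le_contravar; lra.
Qed.

Theorem mainTheorem11 :
  forall (N : nat) (x : R), 0 <= x <= 1 ->
    ex_finite_lim_seq (V2_partial x) /\
    ex_derive V2 x /\
    Rabs (Derive V2 x - phi N x) <= 3 * PI * Series (fun i => / 4 ^ (i + N)) /\
    3 * PI * Series (fun i => / 4 ^ (i + N)) = 4 * PI / 4 ^ N.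
Proof.
  intros N x _.
  assert (Hgeom : is_series (fun i => / 4 ^ (i + N)) (4 / 3 / 4 ^ N))
    by (replace (4 / 3) with (4 / (4 - 1)) by field; apply is_series_inv_pow_shift; lra).
  split; [|split; [|split]].
  - destruct (ex_series_V2_term x) as [l Hl]. exists l. exact Hl.
  - eexists. apply is_derive_V2.
  - rewrite (is_derive_unique _ _ _ (is_derive_V2 x)), phi_sum_dV2_term,
      Series_minus_sum_n by apply ex_series_dV2_term.
    rewrite <- (Series_scal_l (3 * PI) (fun i => / 4 ^ (i + N))).
    apply Series_Rabs_le; [exact (Rabs_dV2_term_tail_le N x)|].
    eexists. apply (@is_series_scal_l R_AbsRing R_NormedModule), Hgeom.
  - rewrite (is_series_unique _ _ Hgeom). field. apply pow_nonzero. lra.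
Qed.
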